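(* Let $n\ge 2$, $q>0$, and let $A\in M_n(\mathbb{C})$ satisfy $\operatorname{tr}A=0$ and $\operatorname{rank}A=1$. Then for all $B\in M_n(\mathbb{C})$, $$\|AB-qBA\|_F^2\le (1+q^2)\,\|A\|_F^2\,\|B\|_F^2 .$$
   Context: $\|X\|_F=\sqrt{\operatorname{tr}(XX^\dagger)}$ denotes the Frobenius norm. *)

From HB Require Import structures.
From mathcomp Require Import all_boot all_order all_algebra.
From mathcomp Require Import complex.
Set Implicit Arguments. Unset Strict Implicit. Unset Printing Implicit Defensive.
Import Order.TTheory GRing.Theory Num.Theory.
Local Open Scope ring_scope.

Definition adjmx (C : numClosedFieldType) (m n : nat) (X : 'M[C]_(m, n)) : 'M[C]_(n, m) :=
  (map_mx Num.conj X)^T.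

Definition frob (C : numClosedFieldType) (n : nat) (X : 'M[C]_n) : C :=
  sqrtC (\tr (X *m adjmx X)).

(* Write the rank-one matrix as A = u w with a column u and a row w; tr A = 0
   says w u = 0, i.e. u is orthogonal to w^*.  Then AB = u (wB) and
   BA = (Bu) w, and with a = |u|^2, b = |w|^2, g = w B u,
     |AB - q BA|^2 = a |wB|^2 + q^2 b |Bu|^2 - 2 q Re <u (wB), (Bu) w>.
   Bessel's inequality for the row wB against the orthogonal pair w, u^*, and
   for the column Bu against u, w^*, together with AM-GM on the cross term,
   bound this by (1 + q^2) (a |wB|^2 + b |Bu|^2 - |g|^2).  The last factor
   counts, in an orthonormal frame adapted to u and w, one row and one column
   of B with their common entry g taken once, so it is at most a b |B|^2. *)

From HB Require Import structures.
From mathcomp Require Import all_boot all_order all_algebra.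
From mathcomp Require Import complex ring.
Import Order.TTheory GRing.Theory Num.Theory.
Local Open Scope ring_scope.
Set Implicit Arguments. Unset Strict Implicit. Unset Printing Implicit Defensive.

Section FrobeniusInnerProduct.
Variable C : numClosedFieldType.
Implicit Types m n p : nat.

Lemma adjmxK m n (X : 'M[C]_(m, n)) : adjmx (adjmx X) = X.
Proof. by apply/matrixP => i j; rewrite !mxE conjCK. Qed.

Lemma adjmxM m n p (X : 'M[C]_(m, n)) (Y : 'M[C]_(n, p)) :
  adjmx (X *m Y) = adjmx Y *m adjmx X.
Proof. by rewrite /adjmx map_mxM trmx_mul. Qed.

Lemma adjmxD m n (X Y : 'M[C]_(m, n)) : adjmx (X + Y) = adjmx X + adjmx Y.
Proof. by rewrite /adjmx map_mxD linearD. Qed.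

Lemma adjmxZ m n (c : C) (X : 'M[C]_(m, n)) : adjmx (c *: X) = c^* *: adjmx X.
Proof. by rewrite /adjmx map_mxZ linearZ. Qed.

Definition mxdot m n (X Y : 'M[C]_(m, n)) := \tr (X *m adjmx Y).

Lemma frob_sqr n (X : 'M[C]_n) : frob X ^+ 2 = mxdot X X.
Proof. exact: sqrtCK. Qed.

Lemma mxdotDl m n (X Y Z : 'M[C]_(m, n)) : mxdot (X + Y) Z = mxdot X Z + mxdot Y Z.
Proof. by rewrite /mxdot mulmxDl mxtraceD. Qed.

Lemma mxdotDr m n (X Y Z : 'M[C]_(m, n)) : mxdot Z (X + Y) = mxdot Z X + mxdot Z Y.
Proof. by rewrite /mxdot adjmxD mulmxDr mxtraceD. Qed.

Lemma mxdotZl m n (c : C) (X Y : 'M[C]_(m, n)) : mxdot (c *: X) Y = c * mxdot X Y.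
Proof. by rewrite /mxdot -scalemxAl mxtraceZ. Qed.

Lemma mxdotZr m n (c : C) (X Y : 'M[C]_(m, n)) : mxdot X (c *: Y) = c^* * mxdot X Y.
Proof. by rewrite /mxdot adjmxZ -scalemxAr mxtraceZ. Qed.

Lemma mxdotNl m n (X Y : 'M[C]_(m, n)) : mxdot (- X) Y = - mxdot X Y.
Proof. by rewrite -scaleN1r mxdotZl mulN1r. Qed.

Lemma mxdotNr m n (X Y : 'M[C]_(m, n)) : mxdot X (- Y) = - mxdot X Y.
Proof. by rewrite -scaleN1r mxdotZr rmorphN1 mulN1r. Qed.

Lemma mxdotE m n (X Y : 'M[C]_(m, n)) :
  mxdot X Y = \sum_i \sum_j X i j * (Y i j)^*.
Proof. by apply: eq_bigr => i _; rewrite mxE; apply: eq_bigr => j _; rewrite !mxE. Qed.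

Lemma mxdotC m n (X Y : 'M[C]_(m, n)) : mxdot Y X = (mxdot X Y)^*.
Proof.
rewrite !mxdotE rmorph_sum; apply: eq_bigr => i _; rewrite rmorph_sum.
by apply: eq_bigr => j _; rewrite rmorphM mulrC; congr (_ * _); exact/esym/conjCK.
Qed.

Lemma mxdot_ge0 m n (X : 'M[C]_(m, n)) : 0 <= mxdot X X.
Proof. by rewrite mxdotE; do 2!apply: sumr_ge0 => ? _; apply: mul_conjC_ge0. Qed.

Lemma mxdot_gt0 m n (X : 'M[C]_(m, n)) : X != 0 -> 0 < mxdot X X.
Proof.
apply: contraNT; rewrite lt_def mxdot_ge0 andbT negbK mxdotE => /eqP X0.
apply/eqP/matrixP => i j; rewrite mxE; apply/eqP; rewrite -mul_conjC_eq0; apply/eqP.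
have ge0 k : 0 <= \sum_l X k l * (X k l)^*.
  by apply: sumr_ge0 => l _; apply: mul_conjC_ge0.
have Xi0 : \sum_l X i l * (X i l)^* = 0 := psumr_eq0P (fun k _ => ge0 k) X0 isT.
exact: (psumr_eq0P (fun l _ => mul_conjC_ge0 (X i l)) Xi0 (i := j) isT).
Qed.

Lemma mxdot_conj m n (X : 'M[C]_(m, n)) : (mxdot X X)^* = mxdot X X.
Proof. exact/geC0_conj/mxdot_ge0. Qed.

Lemma mxdot_mull m n p (M : 'M[C]_(m, n)) (X : 'M[C]_(n, p)) Y :
  mxdot (M *m X) Y = mxdot X (adjmx M *m Y).
Proof. by rewrite /mxdot adjmxM adjmxK -mulmxA mxtrace_mulC mulmxA. Qed.

Lemma mxdot_mulr m n p (M : 'M[C]_(n, p)) (X : 'M[C]_(m, n)) Y :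
  mxdot (X *m M) Y = mxdot X (Y *m adjmx M).
Proof. by rewrite /mxdot adjmxM adjmxK mulmxA. Qed.

Lemma mxdot_adj m n (X Y : 'M[C]_(m, n)) : mxdot (adjmx X) (adjmx Y) = mxdot Y X.
Proof. by rewrite /mxdot adjmxK mxtrace_mulC. Qed.

Lemma mxdot_outer m n (u v : 'cV[C]_m) (x z : 'rV[C]_n) :
  mxdot (u *m x) (v *m z) = mxdot u v * mxdot x z.
Proof.
rewrite /mxdot adjmxM mulmxA mxtrace_mulC !mulmxA -(mulmxA _ x).
rewrite [adjmx v *m u]mx11_scalar mul_scalar_mx mxtraceZ.
by rewrite [\tr (u *m _)]mxtrace_mulC [\tr (adjmx v *m u)]trace_mx11.
Qed.

Lemma mxdot_bessel2 m n (X E F : 'M[C]_(m, n)) :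
  mxdot E F = 0 -> 0 < mxdot E E -> 0 < mxdot F F ->
  mxdot F F * (mxdot X E * (mxdot X E)^*) + mxdot E E * (mxdot X F * (mxdot X F)^*)
    <= mxdot E E * mxdot F F * mxdot X X.
Proof.
move=> EF e_gt0 f_gt0; rewrite -subr_ge0.
set e := mxdot E E; set f := mxdot F F; set s := mxdot X E; set t := mxdot X F.
have ce : e^* = e by apply: mxdot_conj.
have cf : f^* = f by apply: mxdot_conj.
pose Z := (e * f) *: X - (f * s) *: E - (e * t) *: F.
have ZZ : mxdot Z Z = e * f * (e * f * mxdot X X - (f * (s * s^*) + e * (t * t^*))).
  rewrite /Z !(mxdotDl, mxdotDr, mxdotNl, mxdotNr, mxdotZl, mxdotZr).
  rewrite [mxdot E X]mxdotC [mxdot F X]mxdotC [mxdot F E]mxdotC EF -/s -/t -/e -/f.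
  rewrite !rmorphM /= ce cf rmorph0; ring.
by have := mxdot_ge0 Z; rewrite ZZ pmulr_rge0 // mulr_gt0.
Qed.

Lemma mxdot_row_mulmx m n (E : 'rV[C]_m) (M : 'M[C]_(m, n)) :
  mxdot (E *m M) (E *m M) <= mxdot E E * mxdot M M.
Proof.
have [->|E0] := eqVneq E 0; first by rewrite mul0mx /mxdot !mul0mx mxtrace0 mul0r.
have e_gt0 := mxdot_gt0 E0; set e := mxdot E E in e_gt0 *; set z := E *m M.
have EE : E *m adjmx E = e%:M by rewrite [LHS]mx11_scalar -trace_mx11.
pose Z := e *: M - adjmx E *m z.
have zM : mxdot (adjmx E *m z) M = mxdot z z by rewrite mxdot_mull adjmxK.
have Mz : mxdot M (adjmx E *m z) = mxdot z z by rewrite mxdotC zM mxdot_conj.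
have zz : mxdot (adjmx E *m z) (adjmx E *m z) = e * mxdot z z.
  by rewrite mxdot_mull adjmxK mulmxA EE mul_scalar_mx mxdotZr (geC0_conj (ltW e_gt0)).
have ZZ : mxdot Z Z = e * (e * mxdot M M - mxdot z z).
  rewrite /Z !(mxdotDl, mxdotDr, mxdotNl, mxdotNr, mxdotZl, mxdotZr) zM Mz zz.
  by rewrite (geC0_conj (ltW e_gt0)); ring.
by have := mxdot_ge0 Z; rewrite ZZ pmulr_rge0 // subr_ge0.
Qed.

End FrobeniusInnerProduct.

Lemma commutator_scalar_le (C : numClosedFieldType) (a b q X Y s t g : C) :
  0 < a -> 0 < b -> q \is Num.real ->
  a * (s * s^*) + b * (g * g^*) <= b * a * X ->
  b * (t * t^*) + a * (g * g^*) <= a * b * Y ->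
  a * X - q * (t^* * s + t * s^*) + q ^+ 2 * (b * Y)
    <= (1 + q ^+ 2) * (a * X + b * Y - g * g^*).
Proof.
move=> a_gt0 b_gt0 q_real bessel_s bessel_t.
have ca : a^* = a by apply/geC0_conj/ltW.
have cb : b^* = b by apply/geC0_conj/ltW.
have cq : q^* = q by apply: conj_Creal.
(* AM-GM for the cross term, in the form 0 <= |q a s + b t|^2. *)
pose W := q * a * s + b * t.
have WW : W * W^* = (q * a * s + b * t) * (q * a * s^* + b * t^*).
  by rewrite /W rmorphD !rmorphM /= ca cb cq.
have sum_ge0 : 0 <= q ^+ 2 * a * (b * a * X - (a * (s * s^*) + b * (g * g^*)))
                    + b * (a * b * Y - (b * (t * t^*) + a * (g * g^*))) + W * W^*.
  apply: addr_ge0; [apply: addr_ge0 | exact: mul_conjC_ge0].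
  - by apply: mulr_ge0; [apply: mulr_ge0; [rewrite -realEsqr | exact: ltW] | rewrite subr_ge0].
  - by apply: mulr_ge0; [exact: ltW | rewrite subr_ge0].
rewrite -subr_ge0 -(pmulr_rge0 _ (mulr_gt0 a_gt0 b_gt0)).
by congr (0 <= _): sum_ge0; rewrite WW; ring.
Qed.

Section RankOneCommutator.
Variables (C : numClosedFieldType) (m : nat).
Variables (u : 'cV[C]_m) (w : 'rV[C]_m) (B : 'M[C]_m).

Local Notation a := (mxdot u u).
Local Notation b := (mxdot w w).
Local Notation x := (w *m B).
Local Notation y := (B *m u).
Local Notation g := (\tr (w *m B *m u)).

Lemma mxdot_row_adju : mxdot x (adjmx u) = g.
Proof. by rewrite /mxdot adjmxK. Qed.

Lemma mxdot_col_adjw : mxdot y (adjmx w) = g.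
Proof. by rewrite /mxdot adjmxK mxtrace_mulC mulmxA. Qed.

Lemma mxdot_row_col_le :
  u != 0 -> a * mxdot x x + b * mxdot y y - g * g^* <= a * b * mxdot B B.
Proof.
(* D kills u, i.e. it is B with its u-column removed (up to the factor a);
   Cauchy-Schwarz for the row w D then gives the bound. *)
move=> u0; have a_gt0 := mxdot_gt0 u0.
have ca : a^* = a by apply/geC0_conj/ltW.
pose D := a *: B - y *m adjmx u.
have yuB : mxdot (y *m adjmx u) B = mxdot y y by rewrite mxdot_mulr adjmxK.
have ByU : mxdot B (y *m adjmx u) = mxdot y y by rewrite mxdotC yuB mxdot_conj.
have DD : mxdot D D = a * (a * mxdot B B - mxdot y y).
  rewrite /D !(mxdotDl, mxdotDr, mxdotNl, mxdotNr, mxdotZl, mxdotZr) yuB ByU.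
  by rewrite mxdot_outer mxdot_adj ca; ring.
have wD : w *m D = a *: x - g *: adjmx u.
  rewrite /D mulmxBr -scalemxAr mulmxA; congr (_ - _).
  by rewrite [w *m y]mx11_scalar -trace_mx11 mulmxA mul_scalar_mx.
have wDwD : mxdot (w *m D) (w *m D) = a * (a * mxdot x x - g * g^*).
  rewrite wD !(mxdotDl, mxdotDr, mxdotNl, mxdotNr, mxdotZl, mxdotZr).
  by rewrite [mxdot (adjmx u) x]mxdotC mxdot_row_adju mxdot_adj ca; ring.
have := mxdot_row_mulmx w D; rewrite wDwD DD mulrCA ler_pM2l //.
by rewrite -subr_ge0 => H; rewrite -subr_ge0; congr (0 <= _): H; ring.
Qed.

Lemma mxdot_commutator_rank1_le (q : C) :
  w *m u = 0 -> u != 0 -> w != 0 -> q \is Num.real ->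
  mxdot (u *m x - q *: (y *m w)) (u *m x - q *: (y *m w))
    <= (1 + q ^+ 2) * (a * mxdot x x + b * mxdot y y - g * g^*).
Proof.
move=> wu0 u0 w0 q_real.
have [a_gt0 b_gt0] := (mxdot_gt0 u0, mxdot_gt0 w0).
have u_adjw : mxdot u (adjmx w) = 0 by rewrite /mxdot adjmxK mxtrace_mulC wu0 mxtrace0.
have w_adju : mxdot w (adjmx u) = 0 by rewrite /mxdot adjmxK wu0 mxtrace0.
have adju_gt0 : 0 < mxdot (adjmx u) (adjmx u) by rewrite mxdot_adj.
have adjw_gt0 : 0 < mxdot (adjmx w) (adjmx w) by rewrite mxdot_adj.
have bessel_x := mxdot_bessel2 x w_adju b_gt0 adju_gt0.
have bessel_y := mxdot_bessel2 y u_adjw a_gt0 adjw_gt0.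
rewrite mxdot_adj mxdot_row_adju in bessel_x.
rewrite mxdot_adj mxdot_col_adjw in bessel_y.
have -> : mxdot (u *m x - q *: (y *m w)) (u *m x - q *: (y *m w))
    = a * mxdot x x - q * ((mxdot y u)^* * mxdot x w + mxdot y u * (mxdot x w)^*)
      + q ^+ 2 * (b * mxdot y y).
  rewrite !(mxdotDl, mxdotDr, mxdotNl, mxdotNr, mxdotZl, mxdotZr) !mxdot_outer.
  by rewrite [mxdot u y]mxdotC [mxdot w x]mxdotC (conj_Creal q_real); ring.
exact: commutator_scalar_le.
Qed.

End RankOneCommutator.

Lemma rank1_factor (F : fieldType) m n (A : 'M[F]_(m.+1, n.+1)) :
  \rank A = 1%N -> exists (u : 'cV[F]_m.+1) (w : 'rV[F]_n.+1), A = u *m w.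
Proof.
move=> rA; exists (col_ebase A *m delta_mx 0 0), (delta_mx 0 0 *m row_ebase A).
rewrite -{1}(mulmx_ebase A) rA mulmxA -[in RHS](mulmxA (col_ebase A)) mul_delta_mx.
congr (_ *m _ *m _); apply/matrixP => i j; rewrite !mxE.
by case: i j => [[|i] Hi] [[|j] Hj] //=; rewrite ltnS andbF.
Qed.

Local Open Scope complex_scope.

Theorem mainTheorem8 (R : rcfType) (n : nat) (q : R) (A : 'M[R[i]]_n) :
  (2 <= n)%N -> 0 < q -> \tr A = 0 -> \rank A = 1%N ->
  forall B : 'M[R[i]]_n,
    frob (A *m B - q%:C *: (B *m A)) ^+ 2
      <= (1 + q%:C ^+ 2) * frob A ^+ 2 * frob B ^+ 2.
Proof.
case: n A => [//|n] A _ q_gt0 trA rA B.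
have [u [w Auw]] := rank1_factor rA.
have wu0 : w *m u = 0.
  by rewrite [LHS]mx11_scalar -trace_mx11 mxtrace_mulC -Auw trA raddf0.
have u0 : u != 0 by apply: contra_eq_neq rA => u0; rewrite Auw u0 mul0mx mxrank0.
have w0 : w != 0 by apply: contra_eq_neq rA => w0; rewrite Auw w0 mulmx0 mxrank0.
have q_real : q%:C \is Num.real by rewrite gtr0_real // ltcR.
rewrite !frob_sqr Auw mxdot_outer -mulmxA [B *m _]mulmxA -mulrA.
apply: le_trans (mxdot_commutator_rank1_le B wu0 u0 w0 q_real) _.
have q2_ge0 : 0 <= 1 + q%:C ^+ 2 by rewrite addr_ge0 ?ler01 // -realEsqr.
exact: ler_wpM2l q2_ge0 _ _ (mxdot_row_col_le w B u0).
Qed.
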